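(* Let $\Phi:\mathbb{R}^n\to(-\infty,\infty]$ be a proper lower semicontinuous convex function which is strictly convex on $\operatorname{dom}\Phi$. Then there exists a lower semicontinuous convex function $\tilde\varphi:[0,\infty)\times\mathbb{R}^n\to(-\infty,\infty]$ such that $\tilde\varphi(0,y)=\Phi(y)$ for all $y$, $\tilde\varphi$ is real-valued on $(0,\infty)\times\mathbb{R}^n$, $x\mapsto\tilde\varphi(x,y)$ is decreasing for each $y$, $\lim_{x\to0+}\tilde\varphi(x,y)=\Phi(y)$ for each $y$, and moreover $\tilde\varphi$ is strictly convex on $(0,\infty)\times\mathbb{R}^n$.
   Context: A convex function $\Phi:\mathbb{R}^n\to(-\infty,\infty]$ is proper if it is not identically $+\infty$. $\operatorname{dom}\Phi:=\{y\in\mathbb{R}^n:\Phi(y)<\infty\}$. *)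

From HB Require Import structures.
From mathcomp Require Import all_boot all_order all_algebra.
From mathcomp Require Import all_classical all_reals all_analysis.
Set Implicit Arguments. Unset Strict Implicit. Unset Printing Implicit Defensive.
Import Order.TTheory GRing.Theory Num.Theory.
Import numFieldNormedType.Exports.
Local Open Scope classical_set_scope.
Local Open Scope ring_scope.

Definition no_minfty {T : Type} {R : realType} (f : T -> \bar R) :=
  forall x, f x <> -oo%E.

Definition proper_fun {T : Type} {R : realType} (f : T -> \bar R) :=
  no_minfty f /\ exists x, f x <> +oo%E.

Definition edom {T : Type} {R : realType} (f : T -> \bar R) : set T :=
  [set x | f x <> +oo%E].

Definition lsc_on {T : topologicalType} {R : realType}
  (D : set T) (f : T -> \bar R) :=
  forall p, D p -> forall a : R, (a%:E < f p)%E ->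
    \forall z \near p, D z -> (a%:E < f z)%E.

Definition convex_fun_on {R : realType} {V : lmodType R}
  (D : set V) (f : V -> \bar R) :=
  forall p q (t : R), D p -> D q -> 0 < t < 1 ->
    (f (t *: p + (1 - t) *: q)%R <= t%:E * f p + (1 - t)%R%:E * f q)%E.

Definition strictly_convex_fun_on {R : realType} {V : lmodType R}
  (D : set V) (f : V -> \bar R) :=
  forall p q (t : R), D p -> D q -> p <> q -> 0 < t < 1 ->
    (f (t *: p + (1 - t) *: q)%R < t%:E * f p + (1 - t)%R%:E * f q)%E.

From HB Require Import structures.
From mathcomp Require Import all_boot all_order all_algebra.
From mathcomp Require Import all_classical all_reals all_analysis.
From mathcomp Require Import ring lra.
Import Order.TTheory GRing.Theory Num.Theory.
Import numFieldNormedType.Exports.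
Local Open Scope classical_set_scope.
Local Open Scope ring_scope.

Set Implicit Arguments. Unset Strict Implicit. Unset Printing Implicit Defensive.

(** For [x > 0] we take
    [phi (x, y) = inf_z (Phi z + |y - z|^2 / x) - x / (1 + x)],
    the Moreau envelope of [Phi] with parameter [x] tilted by a strictly
    convex decreasing function of [x], and [phi (0, y) = Phi y].  Joint
    convexity comes from the joint convexity of the perspective
    [(x, w) |-> |w|^2 / x]; the envelope decreases in [x] because the penalty
    does.  An affine-in-norm minorant of [Phi] makes the infimum finite and
    attained (the objective is coercive and lower semicontinuous), so at two
    distinct points with the same [x] either the minimizers differ and the
    strict convexity of [Phi] applies, or they coincide and that of [|.|^2]
    does; the tilt handles distinct [x].  Lower semicontinuity at [x = 0]
    follows from that of [Phi] because the penalty forces minimizers to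
    approach [y] as [x] tends to [0]. *)

Lemma ereal_fin_between {R : realType} (u v : \bar R) :
  u <> -oo%E -> (u < v)%E -> exists a : R, (u < a%:E)%E /\ (a%:E < v)%E.
Proof.
case: u => [r| |] // _; last by rewrite ltNge leey.
case: v => [s| |] //.
- move=> rs; exists ((r + s) / 2); rewrite !lte_fin in rs *.
  split; [rewrite ltr_pdivlMr //; lra | rewrite ltr_pdivrMr //; lra].
- by move=> _; exists (r + 1); rewrite lte_fin ltey; split => //; lra.
Qed.

(* A lower semicontinuous function attains its minimum on a nonempty compact
   set: otherwise the strict sublevel sets form a proper filter on [K] whose
   cluster point would lie in one of them. *)
Lemma compact_lsc_attains_min (T : topologicalType) (R : realType)
  (G : T -> \bar R) (K : set T) :
  compact K -> K !=set0 -> no_minfty G ->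
  (forall p, K p -> forall a : R, (a%:E < G p)%E -> \forall z \near p, (a%:E < G z)%E) ->
  exists2 z, K z & forall w, K w -> (G z <= G w)%E.
Proof.
move=> cK [k0 Kk0] Gn lsc; apply: contrapT => nomin.
have below z : K z -> exists2 w, K w & (G w < G z)%E.
  move=> Kz; apply: contrapT => nw; apply: nomin; exists z => // w Kw.
  by rewrite leNgt; apply/negP => Gwz; apply: nw; exists w.
pose B z := K `&` [set w | (G w < G z)%E].
have FF : Filter (filter_from K B).
  apply: filter_from_filter; first by exists k0.
  move=> i j Ki Kj; case: (leP (G i) (G j)) => Gij.
  - by exists i => // w [Kw Gw]; split; split => //; exact: lt_le_trans Gw Gij.
  - by exists j => // w [Kw Gw]; split; split => //; exact: lt_trans Gw Gij.
have PF : ProperFilter (filter_from K B).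
  by apply: filter_from_proper => // z Kz; have [w Kw Gw] := below z Kz; exists w.
have FK : filter_from K B K by exists k0 => // w [].
have [p [Kp clp]] := cK _ PF FK.
have [w Kw Gwp] := below p Kp.
have [a [wa ap]] := ereal_fin_between (Gn w) Gwp.
have Bw : filter_from K B (B w) by exists w.
have [z [[_ Gzw] azl]] := clp _ _ Bw (lsc p Kp a ap).
by have := lt_trans wa azl; rewrite ltNge (ltW Gzw).
Qed.

Lemma lsc_onT (T : topologicalType) (R : realType) (f : T -> \bar R) :
  lsc_on setT f ->
  forall p (a : R), (a%:E < f p)%E -> \forall z \near p, (a%:E < f z)%E.
Proof. by move=> f_lsc p a /(f_lsc p I); apply: filterS => z; apply. Qed.

Lemma nbhs_normrP {K : numDomainType} {V : pseudoMetricNormedZmodType K}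
  (x : V) (P : set V) :
  nbhs x P <-> exists2 r, 0 < r & forall y, `|x - y| < r -> P y.
Proof.
split=> [/nbhs_ballP [r r0 H]|[r r0 H]].
- by exists r => // y xy; apply: H; rewrite -ball_normE.
- by apply/nbhs_ballP; exists r => // y; rewrite -ball_normE; exact: H.
Qed.

Lemma nbhs_pair (T U : topologicalType) (p : T * U) (A : set T) (B : set U)
  (P : set (T * U)) : nbhs p.1 A -> nbhs p.2 B ->
  (forall a b, A a -> B b -> P (a, b)) -> nbhs p P.
Proof. by move=> hA hB H; exists (A, B) => //= -[a b] [/= ha hb]; exact: H. Qed.

Lemma closed_ball_normP {R : realFieldType} {V : normedModType R} (c z : V) (r : R) :
  0 < r -> closed_ball c r z <-> `|z - c| <= r.
Proof. by move=> r0; rewrite closed_ballE // /closed_ball_ /= distrC. Qed.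

Lemma closed_ball_rV_compact (R : realType) n (c : 'rV[R]_n) (r : R) : 0 < r ->
  compact (closed_ball c r).
Proof.
move=> r0; apply: bounded_closed_compact; last exact: closed_ball_closed.
exists (`|c| + r); split; first exact: num_real.
move=> M HM z /(closed_ball_normP _ _ r0) Hz.
have -> : z = c + (z - c) by rewrite addrC subrK.
by apply: le_trans (ler_normD _ _) _; lra.
Qed.

Lemma ereal_convex_comb_pinfty (R : realType) (t : R) (u v : \bar R) :
  0 < t < 1 -> u <> -oo%E -> v <> -oo%E -> u = +oo%E \/ v = +oo%E ->
  (t%:E * u + (1 - t)%:E * v = +oo)%E.
Proof.
move=> /andP[t0 t1] uNy vNy; have t'0 : (0 < (1 - t)%:E)%E by rewrite lte_fin; lra.
have tE : (0 < t%:E)%E by rewrite lte_fin.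
case=> [->|->]; rewrite ?(gt0_muley tE) ?(gt0_muley t'0).
- by case: v vNy => [s| |] //= _; rewrite ?(gt0_muley t'0) addye.
- by case: u uNy => [s| |] //= _; rewrite ?(gt0_muley tE) addey.
Qed.

Section SquaredNorm.
Variables (R : realType) (n : nat).

Definition sqnorm (w : 'rV[R]_n) : R := \sum_i w ord0 i ^+ 2.

Lemma sqnorm_ge0 w : 0 <= sqnorm w.
Proof. by apply: sumr_ge0 => i _; exact: sqr_ge0. Qed.

Lemma sqnorm0 : sqnorm 0 = 0.
Proof. by rewrite /sqnorm big1 // => i _; rewrite mxE expr0n. Qed.

Lemma sqnormBC a b : sqnorm (a - b) = sqnorm (b - a).
Proof. by apply: eq_bigr => i _; rewrite !mxE -sqrrN opprB. Qed.

Lemma sqnorm_gt0 w : w != 0 -> 0 < sqnorm w.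
Proof.
move=> w0; rewrite lt_neqAle sqnorm_ge0 andbT; apply/negP => /eqP/esym/eqP.
rewrite psumr_eq0 => [/allP w_eq0|i _]; last exact: sqr_ge0.
move/negP: w0; apply; apply/eqP/rowP => i; rewrite mxE.
have := w_eq0 i (mem_index_enum _); rewrite /= sqrf_eq0 => /eqP.
by rewrite (ord1 ord0).
Qed.

(* [mx_norm] is the sup norm, dominated by the Euclidean one. *)
Lemma sqr_normr_le_sqnorm w : `|w| ^+ 2 <= sqnorm w.
Proof.
have [/eqP w0|] := eqVneq (mx_norm w) 0.
  have -> : `|w| = 0 by exact/eqP.
  by rewrite expr0n /= sqnorm_ge0.
move=> /mx_norm_neq0 [[i j] /= wij].
have -> : `|w| = `|w i j| by rewrite -wij.
rewrite (ord1 i) /sqnorm (bigD1 j) //= real_normK ?num_real // lerDl.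
by apply: sumr_ge0 => k _; exact: sqr_ge0.
Qed.

Lemma sqnorm_convex_gap (t : R) a b :
  t * sqnorm a + (1 - t) * sqnorm b - sqnorm (t *: a + (1 - t) *: b) =
  t * (1 - t) * sqnorm (a - b).
Proof.
rewrite /sqnorm !mulr_sumr -big_split /= -sumrB; apply: eq_bigr => i _.
by rewrite !mxE; ring.
Qed.

(* Young: [2 w d <= eta w^2 + d^2 / eta], coordinatewise. *)
Lemma sqnormD_ge (w d : 'rV[R]_n) (eta : R) : 0 < eta ->
  (1 - eta) * sqnorm w - sqnorm d / eta <= sqnorm (w + d).
Proof.
move=> eta0; rewrite /sqnorm mulr_sumr mulr_suml -sumrB.
apply: ler_sum => i _; rewrite !mxE -subr_ge0.
set a := w ord0 i; set b := d ord0 i.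
have -> : (a + b) ^+ 2 - ((1 - eta) * a ^+ 2 - b ^+ 2 / eta) =
    (eta * a + b) ^+ 2 / eta + b ^+ 2 by field; rewrite lt0r_neq0.
by apply: addr_ge0; [apply: divr_ge0; [exact: sqr_ge0 | exact: ltW] | exact: sqr_ge0].
Qed.

Lemma sqnorm_convex (t : R) a b : 0 <= t <= 1 ->
  sqnorm (t *: a + (1 - t) *: b) <= t * sqnorm a + (1 - t) * sqnorm b.
Proof.
move=> /andP[t0 t1]; rewrite -subr_ge0 sqnorm_convex_gap.
by rewrite !mulr_ge0 ?sqnorm_ge0 ?subr_ge0.
Qed.

Lemma sqnorm_strictly_convex (t : R) a b : 0 < t < 1 -> a != b ->
  sqnorm (t *: a + (1 - t) *: b) < t * sqnorm a + (1 - t) * sqnorm b.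
Proof.
move=> /andP[t0 t1] ab; rewrite -subr_gt0 sqnorm_convex_gap.
by rewrite !mulr_gt0 ?subr_gt0 // sqnorm_gt0 // subr_eq0.
Qed.

Lemma continuous_sqnorm : continuous sqnorm.
Proof.
apply: continuous_big => [|i _ w]; first exact: add_continuous.
exact: (continuous_comp (@coord_continuous R 1 n ord0 i w) (@exprn_continuous R 2 _)).
Qed.

Lemma continuous_sqnormB (y : 'rV[R]_n) : continuous (fun z : 'rV[R]_n => sqnorm (y - z)).
Proof.
move=> p; have yBp : (fun z => y - z) @ p --> y - p.
  exact: (@cvgB _ _ _ (nbhs p) _ (fun=> y) id _ _ (cvg_cst _) cvg_id).
by have := cvg_comp _ _ yBp (@continuous_sqnorm (y - p)); exact.
Qed.

End SquaredNorm.

(* The perspective [(x, a) |-> a^2 / x] is jointly convex on [x >= 0], with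
   the convention [0^2 / 0 = 0] given by [0^-1 = 0]. *)
Lemma sqr_perspective_convex (R : realType) (t x1 x2 a b : R) :
  0 < t < 1 -> 0 <= x1 -> 0 <= x2 ->
  (x1 = 0 -> a = 0) -> (x2 = 0 -> b = 0) -> 0 < t * x1 + (1 - t) * x2 ->
  (t * a + (1 - t) * b) ^+ 2 / (t * x1 + (1 - t) * x2) <=
  t * (a ^+ 2 / x1) + (1 - t) * (b ^+ 2 / x2).
Proof.
move=> /andP[t0 t1] x10 x20 a0 b0 xm.
have [x1e|x1n] := eqVneq x1 0.
  rewrite x1e (a0 x1e) !mulr0 !add0r in xm *.
  rewrite expr0n /= mul0r mulr0 add0r le_eqVlt; apply/orP; left; apply/eqP.
  by field; apply/andP; split; rewrite lt0r_neq0 //; nra.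
have [x2e|x2n] := eqVneq x2 0.
  rewrite x2e (b0 x2e) !mulr0 !addr0 in xm *.
  rewrite expr0n /= mul0r mulr0 addr0 le_eqVlt; apply/orP; left; apply/eqP.
  by field; apply/andP; split; rewrite lt0r_neq0 //; nra.
have x1p : 0 < x1 by rewrite lt0r x1n.
have x2p : 0 < x2 by rewrite lt0r x2n.
rewrite -subr_ge0.
have -> : t * (a ^+ 2 / x1) + (1 - t) * (b ^+ 2 / x2) -
    (t * a + (1 - t) * b) ^+ 2 / (t * x1 + (1 - t) * x2) =
    t * (1 - t) * (a * x2 - b * x1) ^+ 2 / (x1 * x2 * (t * x1 + (1 - t) * x2)).
  by field; rewrite !lt0r_neq0.
apply: divr_ge0; last by apply: mulr_ge0; [apply: mulr_ge0|]; exact: ltW.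
by apply: mulr_ge0; [apply: mulr_ge0; lra | exact: sqr_ge0].
Qed.

Lemma sqnorm_perspective_convex (R : realType) n (t x1 x2 : R) (a b : 'rV[R]_n) :
  0 < t < 1 -> 0 <= x1 -> 0 <= x2 ->
  (x1 = 0 -> a = 0) -> (x2 = 0 -> b = 0) -> 0 < t * x1 + (1 - t) * x2 ->
  sqnorm (t *: a + (1 - t) *: b) / (t * x1 + (1 - t) * x2) <=
  t * (sqnorm a / x1) + (1 - t) * (sqnorm b / x2).
Proof.
move=> t01 x10 x20 a0 b0 xm.
rewrite /sqnorm !mulr_suml !mulr_sumr -big_split /=; apply: ler_sum => i _.
rewrite !mxE; apply: sqr_perspective_convex => //.
- by move=> /a0 ->; rewrite mxE.
- by move=> /b0 ->; rewrite mxE.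
Qed.

Section Tilt.
Variable R : realType.

Definition tilt (x : R) := - (x / (1 + x)).

Lemma tilt0 : tilt 0 = 0.
Proof. by rewrite /tilt mul0r oppr0. Qed.

Lemma tilt_convex_gap (t a b : R) : 0 <= a -> 0 <= b -> 0 <= t <= 1 ->
  t * tilt a + (1 - t) * tilt b - tilt (t * a + (1 - t) * b) =
  t * (1 - t) * (a - b) ^+ 2 / ((1 + a) * (1 + b) * (1 + (t * a + (1 - t) * b))).
Proof.
move=> a0 b0 /andP[t0 t1]; have : 0 <= t * a + (1 - t) * b by nra.
by rewrite /tilt => ?; field; rewrite !lt0r_neq0 //; lra.
Qed.

Lemma tilt_strictly_convex (t a b : R) : 0 < t < 1 -> 0 <= a -> 0 <= b -> a != b ->
  tilt (t * a + (1 - t) * b) < t * tilt a + (1 - t) * tilt b.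
Proof.
move=> /andP[t0 t1] a0 b0 ab; rewrite -subr_gt0 tilt_convex_gap //; last lra.
have : 0 <= t * a + (1 - t) * b by nra.
move=> m0; apply: divr_gt0; last by apply: mulr_gt0; [apply: mulr_gt0|]; lra.
apply: mulr_gt0; first nra.
by rewrite lt_neqAle sqr_ge0 andbT eq_sym sqrf_eq0 subr_eq0.
Qed.

Lemma tilt_convex (t a b : R) : 0 < t < 1 -> 0 <= a -> 0 <= b ->
  tilt (t * a + (1 - t) * b) <= t * tilt a + (1 - t) * tilt b.
Proof.
move=> t01 a0 b0; have [->|ab] := eqVneq a b; last first.
  exact/ltW/tilt_strictly_convex.
by rewrite -!mulrDl subrKC !mul1r.
Qed.

Lemma tilt_nonincr (x x' : R) : 0 <= x -> x <= x' -> tilt x' <= tilt x.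
Proof.
move=> x0 xx'; rewrite /tilt lerN2 ler_pdivrMr; last lra.
by rewrite mulrAC ler_pdivlMr; nra.
Qed.

Lemma tilt_le0 (x : R) : 0 <= x -> tilt x <= 0.
Proof. by move=> x0; rewrite -tilt0; exact: tilt_nonincr. Qed.

Lemma tilt_ge_opp (x : R) : 0 <= x -> - x <= tilt x.
Proof. by move=> x0; rewrite /tilt lerN2 ler_pdivrMr; nra. Qed.

Lemma tilt_lipschitz (x x' : R) : 0 <= x -> 0 <= x' -> tilt x - `|x' - x| <= tilt x'.
Proof.
move=> x0 x'0; have d1 : 1 <= (1 + x) * (1 + x') by nra.
have d0 : 0 < (1 + x) * (1 + x') by exact: lt_le_trans ltr01 d1.
have -> : tilt x = tilt x' + (x' - x) / ((1 + x) * (1 + x')).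
  by rewrite /tilt; field; rewrite !lt0r_neq0 //; lra.
suff : (x' - x) / ((1 + x) * (1 + x')) <= `|x' - x| by lra.
apply: le_trans (ler_norm _) _.
rewrite normrM normfV (gtr0_norm d0) ler_pdivrMr //.
by apply: ler_peMr => //; exact: normr_ge0.
Qed.

End Tilt.

Lemma convex_combB (R : pzRingType) (V : lmodType R) (t : R) (a b c d : V) :
  t *: a + (1 - t) *: b - (t *: c + (1 - t) *: d) =
  t *: (a - c) + (1 - t) *: (b - d).
Proof. by rewrite !scalerBr opprD addrACA. Qed.

Lemma lsc_addr_continuous (T : topologicalType) (R : realType)
  (f : T -> \bar R) (g : T -> R) (p : T) : f p <> -oo%E ->
  (forall a : R, (a%:E < f p)%E -> \forall z \near p, (a%:E < f z)%E) ->
  {for p, continuous g} ->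
  forall a : R, (a%:E < f p + (g p)%:E)%E ->
    \forall z \near p, (a%:E < f z + (g z)%:E)%E.
Proof.
move=> fpNy f_lsc g_cont a afg.
have afp : ((a - g p)%:E < f p)%E.
  case: (f p) afg fpNy => [r afg _| _ _|//]; last exact: ltey.
  by rewrite -EFinD lte_fin in afg; rewrite lte_fin; lra.
have [b [abg bf]] : exists b : R, ((a - g p)%:E < b%:E)%E /\ (b%:E < f p)%E.
  by apply: (ereal_fin_between _ afp).
rewrite lte_fin in abg.
have gp : a - b < g p by lra.
apply: filterS2 (f_lsc b bf) (cvgr_gt _ g_cont _ gp) => z bfz abgz.
case: (f z) bfz => [r bfz| _|//]; last by rewrite addye ?ltey.
by rewrite -EFinD lte_fin; rewrite lte_fin in bfz; lra.
Qed.

Lemma quadratic_dominates_linear (R : realFieldType) (beta x r s C : R) :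
  0 <= beta -> 0 < x -> 0 < r -> r <= s ->
  x * (2 * beta * r + 4 * `|C|) <= r ^+ 2 -> C <= s ^+ 2 / x - beta * s.
Proof.
move=> beta0 x0 r0 rs hx.
have hC : C <= `|C| := ler_norm C.
have Cx : 0 <= x * `|C| by apply: mulr_ge0 => //; exact: ltW.
have bx : beta * x <= r / 2.
  rewrite ler_pdivlMr //; rewrite expr2 in hx; nra.
have -> : s ^+ 2 / x - beta * s = s * (s - beta * x) / x by field; rewrite lt0r_neq0.
rewrite ler_pdivlMr //.
have h1 : s * (s / 2) <= s * (s - beta * x) by apply: ler_wpM2l; lra.
have h2 : r * r <= s * s by apply: ler_pM; lra.
have h3 : x * C <= x * `|C| by apply: ler_wpM2l; lra.
rewrite expr2 in hx; nra.
Qed.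

Section Envelope.
Variables (R : realType) (n : nat) (Phi : 'rV[R]_n -> \bar R).
Hypothesis Phi_nNy : no_minfty Phi.
Hypothesis Phi_lsc : lsc_on setT Phi.
Hypothesis Phi_convex : convex_fun_on setT Phi.
Hypothesis Phi_strict : strictly_convex_fun_on (edom Phi) Phi.

Lemma dom_fineK z : edom Phi z -> Phi z = (fine (Phi z))%:E.
Proof. by move: (@Phi_nNy z); rewrite /edom /=; case: (Phi z). Qed.

Lemma dom_convex t z1 z2 : 0 < t < 1 -> edom Phi z1 -> edom Phi z2 ->
  edom Phi (t *: z1 + (1 - t) *: z2) /\
  fine (Phi (t *: z1 + (1 - t) *: z2)) <= t * fine (Phi z1) + (1 - t) * fine (Phi z2).
Proof.
move=> t01 d1 d2; have := Phi_convex (p := z1) (q := z2) I I t01.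
rewrite (dom_fineK d1) (dom_fineK d2) -!EFinM -EFinD.
have := @Phi_nNy (t *: z1 + (1 - t) *: z2).
case Ez: (Phi _) => [s| |] //= _ H.
by split; [rewrite /edom /= Ez | rewrite lee_fin in H].
Qed.

(* The minimum [m] of [Phi] on the unit ball around [z0] bounds it there; a
   point [z] farther away is bounded through convexity on the segment
   [[z0, z]], which crosses the unit sphere at parameter [1 / |z - z0|]. *)
Lemma convex_lsc_minorant z0 : edom Phi z0 -> exists m beta, 0 <= beta /\
  forall z, ((m - beta * `|z - z0|)%:E <= Phi z)%E.
Proof.
move=> dz0; have r0 : (0 : R) < 1 by [].
have ball_z0 := @closed_ballxx R _ z0 1 r0.
have [zm _ zm_min] := compact_lsc_attains_min (closed_ball_rV_compact (c := z0) r0)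
  (ex_intro _ z0 ball_z0) Phi_nNy (fun p _ a => lsc_onT Phi_lsc (p := p) (a := a)).
have m_le := zm_min _ ball_z0.
have dzm : edom Phi zm by move: m_le dz0; rewrite /edom /=; case: (Phi zm); case: (Phi z0).
rewrite (dom_fineK dz0) (dom_fineK dzm) lee_fin in m_le.
set m := fine (Phi zm) in m_le *; set f0 := fine (Phi z0) in m_le.
exists m, (f0 - m); split => [|z]; first by rewrite subr_ge0.
have [zin|zout] := leP `|z - z0| 1.
  apply: le_trans (zm_min z _); last exact/closed_ball_normP.
  by rewrite (dom_fineK dzm) lee_fin gerBl; apply: mulr_ge0 => //; lra.
set r := `|z - z0| in zout *.
have t01 : 0 < r^-1 < 1 by rewrite invr_gt0 invf_lt1 ?andbT; lra.
have on_ball : closed_ball z0 1 (r^-1 *: z + (1 - r^-1) *: z0).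
  apply/closed_ball_normP => //.
  have -> : r^-1 *: z + (1 - r^-1) *: z0 - z0 = r^-1 *: (z - z0).
    by apply/rowP => i; rewrite !mxE; ring.
  by rewrite normrZ gtr0_norm ?mulVf ?invr_gt0 ?lt0r_neq0 //; lra.
have := le_trans (zm_min _ on_ball) (Phi_convex I I t01).
rewrite (dom_fineK dzm) (dom_fineK dz0) -/m -/f0.
case: (Phi z) (@Phi_nNy z) => [s| |] // _; last by rewrite leey.
rewrite -!EFinM -EFinD !lee_fin => H.
have H0 : 0 <= r * (r^-1 * s + (1 - r^-1) * f0 - m) by apply: mulr_ge0; lra.
have e : r * (r^-1 * s + (1 - r^-1) * f0 - m) = s + (r - 1) * f0 - r * m.
  by field; rewrite lt0r_neq0 //; lra.
rewrite e in H0; nra.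
Qed.

Definition moreau_obj (x : R) (y z : 'rV[R]_n) := fine (Phi z) + sqnorm (y - z) / x.

Definition moreau (x : R) (y : 'rV[R]_n) := inf [set moreau_obj x y z | z in edom Phi].

Definition envelope (x : R) (y : 'rV[R]_n) := if 0 < x then moreau x y else fine (Phi y).

Definition phi_tilde (p : R * 'rV[R]_n) : \bar R :=
  if 0 < p.1 then (moreau p.1 p.2 + tilt p.1)%:E else Phi p.2.

Lemma moreau_objxx x y : moreau_obj x y y = fine (Phi y).
Proof. by rewrite /moreau_obj subrr sqnorm0 mul0r addr0. Qed.

Section Minorant.
Variables (m beta : R) (z0 : 'rV[R]_n).
Hypotheses (beta_ge0 : 0 <= beta) (dom_z0 : edom Phi z0)
  (Phi_ge : forall z, ((m - beta * `|z - z0|)%:E <= Phi z)%E).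

Lemma moreau_obj_ge x y z : 0 < x -> edom Phi z ->
  m - beta * `|y - z0| - beta * `|y - z| + `|y - z| ^+ 2 / x <= moreau_obj x y z.
Proof.
move=> x0 dz; rewrite /moreau_obj.
have h1 := Phi_ge z; rewrite (dom_fineK dz) lee_fin in h1.
have h2 : `|z - z0| <= `|y - z| + `|y - z0| by rewrite [`|y - z|]distrC ler_distD.
have h3 : `|y - z| ^+ 2 / x <= sqnorm (y - z) / x.
  by apply: ler_wpM2r; [rewrite invr_ge0 ltW | exact: sqr_normr_le_sqnorm].
have h4 : beta * `|z - z0| <= beta * (`|y - z| + `|y - z0|) by apply: ler_wpM2l.
lra.
Qed.

Lemma moreau_obj_bounded_below x y z : 0 < x -> edom Phi z ->
  m - beta * `|y - z0| - beta ^+ 2 * x / 4 <= moreau_obj x y z.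
Proof.
move=> x0 dz; apply: le_trans (moreau_obj_ge y x0 dz).
set s := `|y - z|.
have : 0 <= (s - beta * x / 2) ^+ 2 / x by apply: divr_ge0; [exact: sqr_ge0 | exact: ltW].
have -> : (s - beta * x / 2) ^+ 2 / x = s ^+ 2 / x - beta * s + beta ^+ 2 * x / 4.
  by field; rewrite lt0r_neq0.
lra.
Qed.

Lemma moreau_has_inf x y : 0 < x -> has_inf [set moreau_obj x y z | z in edom Phi].
Proof.
move=> x0; split; first by exists (moreau_obj x y z0), z0.
exists (m - beta * `|y - z0| - beta ^+ 2 * x / 4) => _ [z dz <-].
exact: moreau_obj_bounded_below.
Qed.

Lemma moreau_le x y z : 0 < x -> edom Phi z -> moreau x y <= moreau_obj x y z.
Proof. by move=> x0 dz; apply: (ge_inf (moreau_has_inf y x0).2); exists z. Qed.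

Lemma moreau_approx x y eps : 0 < x -> 0 < eps ->
  exists2 z, edom Phi z & moreau_obj x y z < moreau x y + eps.
Proof.
by move=> x0 e0; have [_ [z dz <-] H] := inf_adherent e0 (moreau_has_inf y x0); exists z.
Qed.

Lemma moreau_ge x y c : (forall z, edom Phi z -> c <= moreau_obj x y z) -> c <= moreau x y.
Proof.
move=> H; apply: lb_le_inf; first by exists (moreau_obj x y z0), z0.
by move=> _ [z dz <-]; exact: H.
Qed.

Lemma moreau_nonincr x x' y : 0 < x -> x <= x' -> moreau x' y <= moreau x y.
Proof.
move=> x0 xx'; apply: moreau_ge => z dz.
apply: le_trans (moreau_le y (lt_le_trans x0 xx') dz) _.
rewrite /moreau_obj lerD2l ler_wpM2l ?sqnorm_ge0 // lef_pV2 ?posrE //.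
exact: lt_le_trans xx'.
Qed.

Lemma moreau_le_fine x y : 0 < x -> edom Phi y -> moreau x y <= fine (Phi y).
Proof.
by move=> x0 dy; rewrite -(moreau_objxx x); exact: moreau_le.
Qed.

Lemma moreau_le_convex_obj t x1 x2 y1 y2 z1 z2 : 0 < t < 1 -> 0 <= x1 -> 0 <= x2 ->
  0 < t * x1 + (1 - t) * x2 -> edom Phi z1 -> edom Phi z2 ->
  (x1 = 0 -> z1 = y1) -> (x2 = 0 -> z2 = y2) ->
  moreau (t * x1 + (1 - t) * x2) (t *: y1 + (1 - t) *: y2) <=
  t * moreau_obj x1 y1 z1 + (1 - t) * moreau_obj x2 y2 z2.
Proof.
move=> t01 x10 x20 xm d1 d2 e1 e2.
have [dm fm] := dom_convex t01 d1 d2.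
apply: le_trans (moreau_le _ xm dm) _.
rewrite /moreau_obj convex_combB.
have w1 : x1 = 0 -> y1 - z1 = 0 by move=> /e1 ->; rewrite subrr.
have w2 : x2 = 0 -> y2 - z2 = 0 by move=> /e2 ->; rewrite subrr.
have := sqnorm_perspective_convex t01 x10 x20 w1 w2 xm.
lra.
Qed.

Lemma moreau_jointly_convex t x1 x2 y1 y2 : 0 < t < 1 -> 0 <= x1 -> 0 <= x2 ->
  0 < t * x1 + (1 - t) * x2 -> (x1 = 0 -> edom Phi y1) -> (x2 = 0 -> edom Phi y2) ->
  moreau (t * x1 + (1 - t) * x2) (t *: y1 + (1 - t) *: y2) <=
  t * envelope x1 y1 + (1 - t) * envelope x2 y2.
Proof.
move=> t01 x10 x20 xm h1 h2; apply/ler_addgt0Pr => e e0.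
have near_envelope x y : 0 <= x -> (x = 0 -> edom Phi y) ->
    exists2 z, edom Phi z /\ (x = 0 -> z = y) & moreau_obj x y z <= envelope x y + e.
  move=> x0 hx; rewrite /envelope; case: ifPn => [xp|].
    have [z dz hz] := moreau_approx y xp e0; exists z; last exact: ltW.
    by split => // x0'; rewrite x0' ltxx in xp.
  rewrite -leNgt => x_le0; have {x0 x_le0}x0 : x = 0 by apply/le_anti/andP.
  by exists y; [split => //; exact: hx | rewrite moreau_objxx lerDl ltW].
have [z1 [d1 e1] g1] := near_envelope _ _ x10 h1.
have [z2 [d2 e2] g2] := near_envelope _ _ x20 h2.
have := moreau_le_convex_obj t01 x10 x20 xm d1 d2 e1 e2.
case/andP: t01 => t0 t1.
have k1 : t * moreau_obj x1 y1 z1 <= t * (envelope x1 y1 + e).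
  by apply: ler_wpM2l => //; exact: ltW.
have k2 : (1 - t) * moreau_obj x2 y2 z2 <= (1 - t) * (envelope x2 y2 + e).
  by apply: ler_wpM2l => //; lra.
lra.
Qed.

Lemma moreau_jointly_convex_pos t x1 x2 y1 y2 : 0 < t < 1 -> 0 < x1 -> 0 < x2 ->
  moreau (t * x1 + (1 - t) * x2) (t *: y1 + (1 - t) *: y2) <=
  t * moreau x1 y1 + (1 - t) * moreau x2 y2.
Proof.
move=> t01 x1p x2p; case/andP: (t01) => t0 t1.
have xm : 0 < t * x1 + (1 - t) * x2 by nra.
have := moreau_jointly_convex t01 (ltW x1p) (ltW x2p) xm; rewrite /envelope x1p x2p.
by apply; [move=> x10; rewrite x10 ltxx in x1p | move=> x20; rewrite x20 ltxx in x2p].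
Qed.

Lemma moreau_convex_in_x t x1 x2 y : 0 < t < 1 -> 0 < x1 -> 0 < x2 ->
  moreau (t * x1 + (1 - t) * x2) y <= t * moreau x1 y + (1 - t) * moreau x2 y.
Proof.
move=> t01 x1p x2p; have := moreau_jointly_convex_pos y y t01 x1p x2p.
by rewrite -scalerDl subrKC scale1r.
Qed.

Lemma moreau_obj_ge_far x y z c C r : 0 < x -> edom Phi z -> 0 < r -> r <= `|y - z| ->
  c - m + beta * `|y - z0| <= C -> x * (2 * beta * r + 4 * `|C|) <= r ^+ 2 ->
  c <= moreau_obj x y z.
Proof.
move=> x0 dz r0 far hC hx; have := moreau_obj_ge y x0 dz.
have := quadratic_dominates_linear beta_ge0 x0 r0 far hx; lra.
Qed.

(* Minimizing over a closed ball of radius [rho] suffices: outside it the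
   objective exceeds [moreau x y + 1], a value it takes inside. *)
Lemma moreau_attained x y : 0 < x -> exists2 z, edom Phi z & moreau_obj x y z = moreau x y.
Proof.
move=> x0; set c := moreau x y + 1; set C := c - m + beta * `|y - z0|.
set rho := 1 + 2 * beta * x + 4 * x * `|C|.
have bx : 0 <= beta * x by apply: mulr_ge0 => //; exact: ltW.
have Cx : 0 <= x * `|C| by apply: mulr_ge0 => //; exact: ltW.
have rho0 : 0 < rho by rewrite /rho; lra.
have far z : edom Phi z -> rho <= `|y - z| -> c <= moreau_obj x y z.
  move=> dz yz; apply: (moreau_obj_ge_far (C := C) x0 dz rho0 yz) => //.
  have : 0 <= x * `|C| * (rho - 1) by apply: mulr_ge0; rewrite /rho; lra.
  rewrite /rho; nra.
pose G z := (Phi z + (sqnorm (y - z) / x)%:E)%E.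
have GNy : no_minfty G by move=> z; rewrite /G; case: (Phi z) (@Phi_nNy z).
have G_obj z : edom Phi z -> G z = (moreau_obj x y z)%:E.
  by move=> dz; rewrite /G (dom_fineK dz) -EFinD.
have G_lsc p a : (a%:E < G p)%E -> \forall z \near p, (a%:E < G z)%E.
  have pen_cont : {for p, continuous (fun z : 'rV[R]_n => sqnorm (y - z) / x)}.
    exact: cvgMr_tmp (@continuous_sqnormB _ _ y p).
  exact: lsc_addr_continuous (@Phi_nNy p) (lsc_onT Phi_lsc (p := p)) pen_cont a.
have [zs Kzs zs_min] := compact_lsc_attains_min (closed_ball_rV_compact (c := y) rho0)
  (ex_intro _ y (@closed_ballxx _ _ y _ rho0)) GNy (fun p _ => @G_lsc p).
have [zb dzb zb_lt] := moreau_approx y x0 ltr01.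
have Kzb : closed_ball y rho zb.
  apply/closed_ball_normP => //; rewrite distrC leNgt; apply/negP => yzb.
  by have := far _ dzb (ltW yzb); rewrite /c; lra.
have zs_le_zb := zs_min _ Kzb; rewrite (G_obj _ dzb) in zs_le_zb.
have dzs : edom Phi zs by move: zs_le_zb; rewrite /G /edom /=; case: (Phi zs).
exists zs => //; apply/le_anti; rewrite moreau_le // andbT.
apply: moreau_ge => z dz; have [zK|yz] := leP `|y - z| rho.
  have Kz : closed_ball y rho z by apply/closed_ball_normP; rewrite // distrC.
  by have := zs_min _ Kz; rewrite (G_obj _ dz) (G_obj _ dzs) lee_fin.
have := far _ dz (ltW yz).
by rewrite (G_obj _ dzs) lee_fin in zs_le_zb; rewrite /c; lra.
Qed.

(* With minimizers [z1], [z2] at [y1], [y2]: if [z1 != z2] the strict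
   convexity of [Phi] gives the strict inequality, and if [z1 = z2] the
   residuals [y1 - z1] and [y2 - z2] differ and [sqnorm] is strictly convex. *)
Lemma moreau_strictly_convex x y1 y2 t : 0 < x -> y1 <> y2 -> 0 < t < 1 ->
  moreau x (t *: y1 + (1 - t) *: y2) < t * moreau x y1 + (1 - t) * moreau x y2.
Proof.
move=> x0 y12 t01.
have [z1 d1 <-] := moreau_attained y1 x0.
have [z2 d2 <-] := moreau_attained y2 x0.
have [dm fm] := dom_convex t01 d1 d2.
apply: le_lt_trans (moreau_le _ x0 dm) _.
rewrite /moreau_obj convex_combB.
have -> : t * (fine (Phi z1) + sqnorm (y1 - z1) / x) +
    (1 - t) * (fine (Phi z2) + sqnorm (y2 - z2) / x) =
    t * fine (Phi z1) + (1 - t) * fine (Phi z2) +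
    (t * sqnorm (y1 - z1) + (1 - t) * sqnorm (y2 - z2)) / x.
  by rewrite mulrDl !mulrDr !mulrA; lra.
have [ez|nz] := eqVneq z1 z2.
  have w12 : y1 - z1 != y2 - z2.
    by rewrite ez; apply/negP => /eqP/addIr h; apply: y12.
  apply: ler_ltD => //; rewrite ltr_pM2r ?invr_gt0 //.
  exact: sqnorm_strictly_convex.
have Phi_lt : fine (Phi (t *: z1 + (1 - t) *: z2)) <
    t * fine (Phi z1) + (1 - t) * fine (Phi z2).
  have := Phi_strict d1 d2 (elimN eqP nz) t01.
  by rewrite (dom_fineK dm) (dom_fineK d1) (dom_fineK d2) -!EFinM -EFinD lte_fin.
apply: ltr_leD => //; rewrite ler_pM2r ?invr_gt0 //; apply: sqnorm_convex.
by case/andP: t01 => t0 t1; rewrite !ltW.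
Qed.

Lemma phi_tilde_nNy p : phi_tilde p <> -oo%E.
Proof. by rewrite /phi_tilde; case: ifP => // _; exact: Phi_nNy. Qed.

Lemma phi_tilde_fin x y : 0 < x -> phi_tilde (x, y) \is a fin_num.
Proof. by move=> x0; rewrite /phi_tilde /= x0. Qed.

Lemma phi_tilde_envelope p : 0 <= p.1 -> phi_tilde p != +oo%E ->
  (p.1 = 0 -> edom Phi p.2) /\ phi_tilde p = (envelope p.1 p.2 + tilt p.1)%:E.
Proof.
move=> p0; rewrite /phi_tilde /envelope; case: ifPn => [p_gt0 _|].
  by split => // p10; rewrite p10 ltxx in p_gt0.
rewrite -leNgt => p_le0; have -> : p.1 = 0 by apply/le_anti/andP.
by move=> /eqP dp; rewrite tilt0 addr0 -dom_fineK.
Qed.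

Lemma phi_tilde_convex : convex_fun_on [set p : R * 'rV[R]_n | 0 <= p.1] phi_tilde.
Proof.
move=> p q t /= p0 q0 t01; case/andP: (t01) => t0 t1.
have [inf|/not_orP[/eqP pfin /eqP qfin]] :=
    pselect (phi_tilde p = +oo%E \/ phi_tilde q = +oo%E).
  by rewrite (ereal_convex_comb_pinfty t01 (@phi_tilde_nNy p) (@phi_tilde_nNy q) inf) leey.
have [dp ->] := phi_tilde_envelope p0 pfin.
have [dq ->] := phi_tilde_envelope q0 qfin.
rewrite /phi_tilde /=; have [xm|] := ltP 0 (t * p.1 + (1 - t) * q.1).
  rewrite -!EFinM -EFinD lee_fin.
  have := moreau_jointly_convex t01 p0 q0 xm dp dq.
  have := tilt_convex t01 p0 q0.
  lra.
move=> xm; have p10 : p.1 = 0 by nra.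
have q10 : q.1 = 0 by nra.
rewrite /envelope p10 q10 ltxx tilt0 !addr0.
by rewrite -!dom_fineK; [exact: Phi_convex | exact: dq | exact: dp].
Qed.

Lemma phi_tilde_strictly_convex :
  strictly_convex_fun_on [set p : R * 'rV[R]_n | 0 < p.1] phi_tilde.
Proof.
move=> p q t /= p0 q0 pq t01; case/andP: (t01) => t0 t1.
have xm : 0 < t * p.1 + (1 - t) * q.1 by nra.
rewrite /phi_tilde /= xm p0 q0 -!EFinM -EFinD lte_fin.
have [e1|n1] := eqVneq p.1 q.1.
  have n2 : p.2 <> q.2.
    by move=> e2; apply: pq; rewrite [LHS]surjective_pairing [RHS]surjective_pairing e1 e2.
  have -> : t * p.1 + (1 - t) * q.1 = p.1 by rewrite -e1 -mulrDl subrKC mul1r.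
  have := moreau_strictly_convex p0 n2 t01.
  by rewrite -e1; lra.
have := moreau_jointly_convex_pos p.2 q.2 t01 p0 q0.
have := tilt_strictly_convex t01 (ltW p0) (ltW q0) n1.
lra.
Qed.

Lemma phi_tilde_nonincr y x x' : 0 <= x -> x <= x' ->
  (phi_tilde (x', y) <= phi_tilde (x, y))%E.
Proof.
move=> x0 xx'; rewrite /phi_tilde /=; have [xp|] := ltP 0 x.
  rewrite (lt_le_trans xp xx') lee_fin.
  by have := moreau_nonincr y xp xx'; have := tilt_nonincr (ltW xp) xx'; lra.
move=> _; case: ifP => // x'p.
have [dy|/contrapT ->] := pselect (edom Phi y); last exact: leey.
rewrite (dom_fineK dy) lee_fin.
by have := moreau_le_fine x'p dy; have := tilt_le0 (ltW x'p); lra.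
Qed.

(* Convexity in [x] along [x / 2 < x < x (1 + kap)] bounds the drop of
   [moreau . y] just to the right of [x]. *)
Lemma moreau_right_lb x y kap : 0 < x -> 0 < kap < 1 ->
  moreau x y - 2 * kap * (moreau (x / 2) y - moreau (2 * x) y) <=
  moreau (x * (1 + kap)) y.
Proof.
move=> x0 /andP[k0 k1].
set A := moreau (x / 2) y; set B := moreau (x * (1 + kap)) y; set F := moreau (2 * x) y.
have x2 : 0 < x / 2 by rewrite divr_gt0.
have xk : 0 < x * (1 + kap) by apply: mulr_gt0 => //; lra.
have FA : F <= A by apply: moreau_nonincr => //; lra.
have FB : F <= B by apply: moreau_nonincr => //; nra.
set lam := 2 * kap / (2 * kap + 1).
have l0 : 0 < lam by rewrite divr_gt0 //; lra.
have l1 : lam < 1 by rewrite ltr_pdivrMr; lra.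
have l2 : lam <= 2 * kap by rewrite ler_pdivrMr; nra.
have hx : lam * (x / 2) + (1 - lam) * (x * (1 + kap)) = x by rewrite /lam; field; lra.
have l01 : 0 < lam < 1 by rewrite l0.
have := moreau_convex_in_x y l01 x2 xk; rewrite hx -/A -/B => H.
have : 0 <= lam * (B - F) by apply: mulr_ge0; lra.
have : 0 <= (2 * kap - lam) * (A - F) by apply: mulr_ge0; lra.
nra.
Qed.

(* Young's inequality splits [|y' - z|^2] into [(1 - eta) |y - z|^2] and
   [|y - y'|^2 / eta]. *)
Lemma moreau_shift_lb x y y' eta : 0 < x -> 0 < eta < 1 ->
  moreau (x / (1 - eta)) y - sqnorm (y - y') / (eta * x) <= moreau x y'.
Proof.
move=> x0 /andP[e0 e1]; have xh : 0 < x / (1 - eta) by rewrite divr_gt0 ?subr_gt0.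
apply: moreau_ge => z dz.
have := moreau_le y xh dz; rewrite /moreau_obj.
have : ((1 - eta) * sqnorm (y - z) - sqnorm (y' - y) / eta) / x <= sqnorm (y' - z) / x.
  rewrite ler_pM2r ?invr_gt0 //.
  have -> : y' - z = (y - z) + (y' - y) by apply/rowP => i; rewrite !mxE; ring.
  exact: sqnormD_ge.
have -> : ((1 - eta) * sqnorm (y - z) - sqnorm (y' - y) / eta) / x =
    sqnorm (y - z) / (x / (1 - eta)) - sqnorm (y - y') / (eta * x).
  by rewrite [sqnorm (y' - y)]sqnormBC; field; rewrite !lt0r_neq0 //; lra.
lra.
Qed.

(* For [(x', y')] near [(x, y)] we have [x' / (1 - eta) <= x (1 + kap)]:
   [moreau_shift_lb] moves [y'] back to [y] at a small cost, and
   [moreau_right_lb] bounds the loss from [x] to [x (1 + kap)]. *)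
Lemma moreau_lsc (x : R) (y : 'rV[R]_n) (eps : R) : 0 < x -> 0 < eps ->
  \forall p \near (x, y), 0 < p.1 /\ moreau x y - eps < moreau p.1 p.2.
Proof.
move=> x0 e0.
set D := moreau (x / 2) y - moreau (2 * x) y.
have D0 : 0 <= D by rewrite subr_ge0; apply: moreau_nonincr; [rewrite divr_gt0 | lra].
set kap := eps / (4 * D + eps + 1).
have kapE : kap * (4 * D + eps + 1) = eps by rewrite /kap; field; rewrite lt0r_neq0 //; lra.
have k0 : 0 < kap by rewrite divr_gt0 //; lra.
have k1 : kap < 1 by rewrite ltr_pdivrMr; lra.
have k01 : 0 < kap < 1 by rewrite k0.
have hA := moreau_right_lb y x0 k01; rewrite -/D in hA.
have kD : 2 * kap * D <= eps / 2 by nra.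
set eta := kap / 4.
have eta0 : 0 < eta by rewrite divr_gt0.
have eta1 : eta < 1 by rewrite /eta; lra.
set del := eps * eta * x / 4.
have del0 : 0 < del by apply: divr_gt0 => //; apply: mulr_gt0 => //; exact: mulr_gt0.
have near_y : \forall y' \near y, sqnorm (y - y') < del.
  move: (@continuous_sqnormB _ _ y y) => /cvgr_lt; apply.
  by rewrite /= subrr sqnorm0.
have near_x : \forall x' \near x, `|x - x'| < Num.min (x / 2) (kap * x / 2).
  apply/nbhs_normrP; exists (Num.min (x / 2) (kap * x / 2)) => //.
  by rewrite lt_min; apply/andP; split; apply: divr_gt0 => //; exact: mulr_gt0.
apply: (@nbhs_pair _ _ (x, y) _ _ _ near_x near_y) => x' y' /=.
rewrite lt_min !ltr_distlC => /andP[/andP[x'1 _] /andP[_ x'2]] yy'.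
have x'p : 0 < x' by lra.
split => //.
set xh := x' / (1 - eta).
have xhp : 0 < xh by rewrite divr_gt0 // subr_gt0.
have xhk : xh <= x * (1 + kap).
  rewrite ler_pdivrMr ?subr_gt0 //.
  have : 0 <= x * kap * (1 - kap) by apply: mulr_ge0; [apply: mulr_ge0|]; lra.
  rewrite /eta; nra.
have eta01 : 0 < eta < 1 by rewrite eta0.
have hB := moreau_shift_lb y y' x'p eta01; rewrite -/xh in hB.
have hmono := moreau_nonincr y xhp xhk.
have hQ : sqnorm (y - y') / (eta * x') < eps / 2.
  rewrite ltr_pdivrMr; last exact: mulr_gt0.
  have : 0 <= eps * eta * (x' - x / 2) by apply: mulr_ge0; [apply: mulr_ge0|]; lra.
  rewrite /del in yy'; nra.
lra.
Qed.

(* Near [x = 0] the infimum is controlled by [Phi] on [|y - z| < 2 r]: a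
   farther [z] pays a penalty of at least [r^2 / x']. *)
Lemma moreau_ge_near0 y c r : 0 < r ->
  (forall z, `|y - z| < 2 * r -> (c%:E < Phi z)%E) ->
  exists2 d, 0 < d & forall x' y', 0 < x' < d -> `|y - y'| < r -> c <= moreau x' y'.
Proof.
move=> r0 near_y.
set C := c - m + beta * (`|y - z0| + r).
set K := 2 * beta * r + 4 * `|C| + 1.
have K0 : 0 < K.
  have : 0 <= beta * r by apply: mulr_ge0 => //; exact: ltW.
  by have := normr_ge0 C; rewrite /K; lra.
exists (r ^+ 2 / K); first by rewrite divr_gt0 // exprn_gt0.
move=> x' y' /andP[x'0 x'd] yy'; apply: moreau_ge => z dz.
have [yz|far] := ltP `|y - z| (2 * r).
  have := near_y z yz; rewrite (dom_fineK dz) lte_fin /moreau_obj => cz.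
  have : 0 <= sqnorm (y' - z) / x' by apply: divr_ge0; [exact: sqnorm_ge0 | exact: ltW].
  lra.
apply: (moreau_obj_ge_far (C := C) x'0 dz r0).
- by have := ler_distD y' y z; lra.
- rewrite lerD2l; apply: ler_wpM2l => //.
  by have := ler_distD y y' z0; rewrite [`|y' - y|]distrC; lra.
- rewrite ltr_pdivlMr // in x'd.
  have : 0 <= x' by exact: ltW.
  rewrite /K in x'd; nra.
Qed.

Lemma phi_tilde_gt_near0 y (a : R) : (a%:E < Phi y)%E ->
  exists2 d, 0 < d & exists2 r, 0 < r &
    forall x' y', 0 <= x' < d -> `|y - y'| < r -> (a%:E < phi_tilde (x', y'))%E.
Proof.
move=> ay.
have [a' [aa' a'y]] : exists a' : R, (a%:E < a'%:E)%E /\ (a'%:E < Phi y)%E.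
  by apply: (ereal_fin_between _ ay).
rewrite lte_fin in aa'.
have /nbhs_normrP [r r0 near_y] := lsc_onT Phi_lsc a'y.
have near_y' z : `|y - z| < 2 * (r / 2) -> (a'%:E < Phi z)%E.
  by rewrite mulrC divfK ?pnatr_eq0 //; exact: near_y.
have r2 : 0 < r / 2 by rewrite divr_gt0.
have [d d0 hd] := moreau_ge_near0 r2 near_y'.
exists (Num.min d ((a' - a) / 2)); first by rewrite lt_min d0 /= divr_gt0 // subr_gt0.
exists (r / 2) => // x' y' /andP[x'0]; rewrite lt_min => /andP[x'd x'a] yy'.
rewrite /phi_tilde /=; case: ifPn => [x'p|_].
  have x'dd : 0 < x' < d by rewrite x'p.
  rewrite lte_fin; have := hd _ _ x'dd yy'.
  by have := tilt_ge_opp x'0; lra.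
apply: lt_trans (near_y y' _); first by rewrite lte_fin.
lra.
Qed.

Lemma phi_tilde_lsc : lsc_on [set p : R * 'rV[R]_n | 0 <= p.1] phi_tilde.
Proof.
move=> [x y] /= x0 a; have [xp|x_le0] := ltP 0 x.
  rewrite {1}/phi_tilde /= xp lte_fin => ax.
  set eps := (moreau x y + tilt x - a) / 2.
  have eps0 : 0 < eps by rewrite divr_gt0 //; lra.
  have near_x : \forall p \near (x, y), `|x - p.1| < eps.
    apply: (@nbhs_pair _ _ (x, y) [set x' | `|x - x'| < eps] setT) => //=.
    - by apply/nbhs_normrP; exists eps.
    - exact: filterT.
  apply: filterS2 (moreau_lsc y xp eps0) near_x => -[x' y'] /= [x'p hm] hx _.
  rewrite /phi_tilde /= x'p lte_fin.
  have := tilt_lipschitz (ltW xp) (ltW x'p); rewrite distrC in hx.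
  by rewrite /eps in hm hx; lra.
have -> : x = 0 by apply/le_anti/andP.
rewrite {1}/phi_tilde /= ltxx => ay.
have [d d0 [r r0 near0]] := phi_tilde_gt_near0 ay.
apply: (@nbhs_pair _ _ (0, y) [set x' | `|0 - x'| < d] [set y' | `|y - y'| < r]).
- by apply/nbhs_normrP; exists d.
- by apply/nbhs_normrP; exists r.
move=> x' y' /= x'd yy' x'0; apply: near0 => //.
by rewrite x'0 /=; move: x'd; rewrite sub0r normrN ger0_norm.
Qed.

Lemma phi_tilde_cvg0 y : (fun x => phi_tilde (x, y)) @ 0^'+ --> Phi y.
Proof.
have gt_near a : (a%:E < Phi y)%E -> \forall x \near 0^'+, (a%:E < phi_tilde (x, y))%E.
  move=> ay; have [d d0 [r r0 near0]] := phi_tilde_gt_near0 ay.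
  apply: filterS2 (nbhs_right_gt 0) (nbhs_right_lt d0) => x x0 xd.
  by apply: near0; [rewrite (ltW x0) | rewrite subrr normr0].
case Ey: (Phi y) (@Phi_nNy y) gt_near => [r| |] // _ gt_near; last first.
  by apply/cvgeyPge => A; apply: filterS (gt_near A (ltey _)) => x /ltW.
apply/fine_cvgP; split.
  by apply: filterS (nbhs_right_gt 0) => x x0; exact: phi_tilde_fin.
apply/cvgrPdist_lt => e e0.
have lt_r : ((r - e)%:E < r%:E)%E by rewrite lte_fin; lra.
apply: filterS2 (nbhs_right_gt 0) (gt_near _ lt_r) => x x0 rex.
have := phi_tilde_nonincr y (le_refl 0) (ltW x0).
rewrite /phi_tilde /= x0 ltxx Ey lee_fin /= => le_r.
rewrite /phi_tilde /= x0 lte_fin in rex.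
by rewrite ltr_distlC; apply/andP; split; lra.
Qed.

End Minorant.

End Envelope.

Theorem corollary2 (R : realType) (n : nat) (Phi : 'rV[R]_n -> \bar R) :
  proper_fun Phi ->
  lsc_on setT Phi ->
  convex_fun_on setT Phi ->
  strictly_convex_fun_on (edom Phi) Phi ->
  exists phi : R * 'rV[R]_n -> \bar R,
    [/\ (forall p, 0 <= p.1 -> phi p <> -oo%E),
        lsc_on [set p : R * 'rV[R]_n | 0 <= p.1] phi,
        convex_fun_on [set p : R * 'rV[R]_n | 0 <= p.1] phi,
        (forall y, phi (0, y) = Phi y) &
      [/\ (forall x y, 0 < x -> phi (x, y) \is a fin_num),
        (forall y x x', 0 <= x -> x <= x' -> (phi (x', y) <= phi (x, y))%E),
        (forall y, (fun x => phi (x, y)) @ at_right 0 --> Phi y)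
      & strictly_convex_fun_on [set p : R * 'rV[R]_n | 0 < p.1] phi]].
Proof.
move=> [PhiNy [z0 dz0]] Phi_lsc Phi_convex Phi_strict.
have [m [beta [beta0 Phi_ge]]] := convex_lsc_minorant PhiNy Phi_lsc Phi_convex dz0.
exists (phi_tilde Phi); split.
- by move=> p _; exact: phi_tilde_nNy.
- exact: (@phi_tilde_lsc _ _ _ PhiNy Phi_lsc Phi_convex _ _ _ beta0 dz0 Phi_ge).
- exact: (@phi_tilde_convex _ _ _ PhiNy Phi_convex _ _ _ beta0 dz0 Phi_ge).
- by move=> y; rewrite /phi_tilde /= ltxx.
split.
- by move=> x y; exact: phi_tilde_fin.
- by move=> y x x' x0 xx'; exact: (phi_tilde_nonincr PhiNy beta0 dz0 Phi_ge y x0 xx').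
- by move=> y; exact: (@phi_tilde_cvg0 _ _ _ PhiNy Phi_lsc _ _ _ beta0 dz0 Phi_ge y).
- exact: (@phi_tilde_strictly_convex _ _ _ PhiNy Phi_lsc Phi_convex Phi_strict
    _ _ _ beta0 dz0 Phi_ge).
Qed.
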